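(* Let $n\ge 3$ and let $A=[a_{ij}]_{i,j=1}^{n-1}$ be a real $(n-1)\times(n-1)$ matrix with zero diagonal, with LOP objective function $f_A$ on $\Sigma_{n-1}$. Define the $n\times n$ matrix $A'=[a_{ij}]_{i,j=1}^{n}$ whose upper-left $(n-1)\times(n-1)$ block is $A$, with $a_{in}=-\sum_{j=1}^{n-1}(a_{ij}-a_{ji})$ for all $i=1,\dots,n-1$ and $a_{ni}=0$ for all $i=1,\dots,n$, and let $f_{A'}$ be its LOP objective function on $\Sigma_n$. Then $\sigma'=[i_1\ i_2\ \cdots\ i_{n-1}\ n]$ is a global maximum of $f_{A'}$ if and only if $\sigma=[i_1\ i_2\ \cdots\ i_{n-1}]$ is a global maximum of $f_A$.
   Context: For a real $m\times m$ matrix $M=[m_{ij}]$ the LOP objective function is $f_M(\sigma)=\sum_{k=1}^{m-1}\sum_{l=k+1}^m m_{\sigma(k)\sigma(l)}$ for $\sigma\in\Sigma_m$, the symmetric group on $\{1,\dots,m\}$; $[i_1\cdots i_m]$ denotes the permutation with $\sigma(k)=i_k$ (the index placed in position $k$). A global maximum (optimum) is a maximizer of the objective over $\Sigma_m$. *)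

From mathcomp Require Import all_boot all_order all_algebra all_fingroup.
Set Implicit Arguments. Unset Strict Implicit. Unset Printing Implicit Defensive.
Import Order.TTheory GRing.Theory Num.Theory.
Local Open Scope ring_scope.

(* LOP objective: f_M(sigma) = sum_{k<l} M (sigma k) (sigma l);
   sigma k is the index placed in position k. *)
Definition lop_obj (R : numDomainType) (m : nat) (M : 'M[R]_m) (s : 'S_m) : R :=
  \sum_(k < m) \sum_(l < m | (k < l)%N) M (s k) (s l).

Definition lop_global_max (R : numDomainType) (m : nat) (M : 'M[R]_m) (s : 'S_m) : Prop :=
  forall t : 'S_m, lop_obj M t <= lop_obj M s.

Definition lop_ext (R : numDomainType) (m : nat) (A : 'M[R]_m) : 'M[R]_(m.+1) :=
  \matrix_(i, j)
    match unlift ord_max i, unlift ord_max j with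
    | Some i', Some j' => A i' j'
    | Some i', None => - \sum_(k < m) (A i' k - A k i')
    | None, _ => 0
    end.

From mathcomp Require Import all_boot all_order all_algebra all_fingroup.
From mathcomp Require Import zify.
Set Implicit Arguments. Unset Strict Implicit. Unset Printing Implicit Defensive.
Import Order.TTheory GRing.Theory Num.Theory.
Local Open Scope ring_scope.

(* If the new index n sits at some position of a permutation of 1..n, move
   the block B of indices placed before n to the end.  Every pair (i, j) with
   i in B and j outside B turns from a_ij into a_ji, while the other pairs keep
   their order, so the objective changes by sum_(i in B) sum_j (a_ji - a_ij),
   which is exactly the contribution sum_(i in B) a_in of n in the original
   permutation.  Hence f_A' takes exactly the values of f_A, and a permutation
   ending with n has the value of its restriction; the net flow over all of
   1..n-1 vanishes. *)

Definition lop_rank_obj (R : zmodType) (m : nat) (M : 'M[R]_m) (r : 'I_m -> nat) : R :=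
  \sum_i \sum_j M i j *+ (r i < r j)%N.

Definition net_inflow (R : zmodType) (m : nat) (M : 'M[R]_m) (B : pred 'I_m) : R :=
  \sum_(i | B i) \sum_j (M j i - M i j).

Definition rotate_rank (T : Type) (r : T -> nat) (p N : nat) (i : T) : nat :=
  if (r i < p)%N then (r i + N)%N else r i.

Lemma lop_objE (R : numDomainType) (m : nat) (M : 'M[R]_m) (s : 'S_m) :
  lop_obj M s = lop_rank_obj M (fun i => s^-1%g i).
Proof.
rewrite /lop_obj /lop_rank_obj (reindex_inj (@perm_inj _ s^-1)).
apply: eq_bigr => i _; rewrite (reindex_inj (@perm_inj _ s^-1)) big_mkcond.
by apply: eq_bigr => j _; rewrite !permKV mulrb.
Qed.

Lemma eq_lop_rank_obj (R : zmodType) (m : nat) (M : 'M[R]_m) (r1 r2 : 'I_m -> nat) :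
  (forall i j, (r1 i < r1 j)%N = (r2 i < r2 j)%N) ->
  lop_rank_obj M r1 = lop_rank_obj M r2.
Proof. by move=> r12; apply: eq_bigr => i _; apply: eq_bigr => j _; rewrite r12. Qed.

Lemma perm_of_injective_rank (m : nat) (r : 'I_m -> nat) : injective r ->
  exists s : 'S_m, forall i j, (s i < s j)%N = (r i < r j)%N.
Proof.
move=> r_inj.
pose rank i := #|[set j | (r j < r i)%N]|.
have rank_lt i : (rank i < m)%N.
  rewrite -[m in (_ < m)%N]card_ord -cardsT; apply: proper_card.
  by rewrite properT; apply/negP => /eqP setT_lt; move: (in_setT i); rewrite -setT_lt inE ltnn.
have rank_mono i j : (r i < r j)%N -> (rank i < rank j)%N.
  move=> rij; apply: proper_card; apply/properP; split.
    by apply/subsetP => k; rewrite !inE => /ltn_trans; apply.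
  by exists i; rewrite !inE ?rij // ltnn.
have rankE i j : (rank i < rank j)%N = (r i < r j)%N.
  case: (ltngtP (r i) (r j)) => [rij|rji|/r_inj->]; last by rewrite !ltnn.
    exact: rank_mono.
  by apply/negbTE; rewrite -leqNgt ltnW ?rank_mono.
have rank_inj : injective (fun i => Ordinal (rank_lt i)).
  move=> i j /(congr1 val) /= eq_ij; apply: r_inj.
  by case: (ltngtP (r i) (r j)) => // /rank_mono; rewrite eq_ij ltnn.
by exists (perm rank_inj) => i j; rewrite !permE /= rankE.
Qed.

Lemma rotate_rank_inj (T : Type) (r : T -> nat) (p N : nat) :
  injective r -> (forall i, r i < N)%N -> injective (rotate_rank r p N).
Proof.
move=> r_inj r_lt i j; rewrite /rotate_rank; have := r_lt i; have := r_lt j.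
by case: ifP => _; case: ifP => _ ? ? eq_ij; apply: r_inj; lia.
Qed.

Lemma net_inflowE (R : zmodType) (m : nat) (M : 'M[R]_m) (B : pred 'I_m) :
  net_inflow M B = \sum_i \sum_j M i j *+ B j - \sum_i \sum_j M i j *+ B i.
Proof.
rewrite /net_inflow (eq_bigr _ (fun i _ => sumrB _ _ _ _)) sumrB exchange_big /=.
under [X in _ = X - _]eq_bigr do under eq_bigr do rewrite mulrb.
under [X in _ = _ - X]eq_bigr do rewrite sumrMnl mulrb.
by rewrite -big_mkcond; under [X in _ = X - _]eq_bigr do rewrite -big_mkcond.
Qed.

Lemma net_inflow_full (R : zmodType) (m : nat) (M : 'M[R]_m) (B : pred 'I_m) :
  (forall i, B i) -> net_inflow M B = 0.
Proof.
move=> allB; rewrite /net_inflow (eq_bigl xpredT) //.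
by rewrite (eq_bigr _ (fun i _ => sumrB _ _ _ _)) sumrB exchange_big subrr.
Qed.

Lemma lop_rank_obj_rotate (R : zmodType) (m : nat) (M : 'M[R]_m) (r : 'I_m -> nat)
    (p N : nat) :
  (forall i, r i < N)%N ->
  lop_rank_obj M (rotate_rank r p N) = lop_rank_obj M r + net_inflow M [pred i | (r i < p)%N].
Proof.
move=> r_lt; rewrite net_inflowE -!sumrB -big_split; apply: eq_bigr => i _.
rewrite -!sumrB -big_split; apply: eq_bigr => j _ /=; rewrite /rotate_rank.
case: (ltnP (r i) p) => hi; case: (ltnP (r j) p) => hj /=.
- by rewrite ltn_add2r subrr addr0.
- rewrite ltnNge (leq_trans (ltnW (r_lt j)) (leq_addl _ _)) (leq_trans hi hj).
  by rewrite sub0r subrr.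
- rewrite (leq_trans (r_lt i) (leq_addl _ _)) ltnNge (leq_trans (ltnW hj) hi).
  by rewrite subr0 add0r.
- by rewrite subrr addr0.
Qed.

Lemma lop_rank_obj_ext (R : numDomainType) (m : nat) (A : 'M[R]_m) (r : 'I_m.+1 -> nat) :
  lop_rank_obj (lop_ext A) r =
  lop_rank_obj A (r \o lift ord_max) +
  net_inflow A [pred i | (r (lift ord_max i) < r ord_max)%N].
Proof.
rewrite /lop_rank_obj (bigD1_ord ord_max) //= big1 ?add0r; last first.
  by move=> j _; rewrite mxE unlift_none mul0rn.
under eq_bigr do rewrite (bigD1_ord ord_max) //= mxE liftK unlift_none.
under eq_bigr do under eq_bigr do rewrite mxE !liftK.
rewrite big_split [LHS]addrC; congr (_ + _).
rewrite /net_inflow [RHS]big_mkcond; apply: eq_bigr => i _.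
by rewrite mulrb -sumrN; under eq_bigr do rewrite opprB.
Qed.

Lemma lop_obj_ext_lift_perm (R : numDomainType) (m : nat) (A : 'M[R]_m) (s : 'S_m) :
  lop_obj (lop_ext A) (lift_perm ord_max ord_max s) = lop_obj A s.
Proof.
rewrite !lop_objE lop_rank_obj_ext lift_permV net_inflow_full ?addr0 => [|i].
  by apply: eq_lop_rank_obj => i j /=; rewrite !lift_perm_lift !lift_max.
by rewrite /= lift_perm_lift lift_perm_id lift_max ltn_ord.
Qed.

Lemma lop_obj_ext_rotate (R : numDomainType) (m : nat) (A : 'M[R]_m) (t : 'S_m.+1) :
  exists s : 'S_m, lop_obj (lop_ext A) t = lop_obj A s.
Proof.
pose r := (fun i => nat_of_ord (t^-1%g i)) \o lift ord_max.
have r_lt i : (r i < m.+1)%N by exact: ltn_ord.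
have r_inj : injective r by move=> i j /val_inj /perm_inj /lift_inj.
have [s s_rank] := perm_of_injective_rank (rotate_rank_inj (p := t^-1%g ord_max) r_inj r_lt).
exists s^-1%g; rewrite !lop_objE lop_rank_obj_ext invgK (eq_lop_rank_obj A s_rank).
by rewrite [RHS](lop_rank_obj_rotate _ _ r_lt) /r.
Qed.

Theorem proposition4 (R : realFieldType) (m : nat) (hm : (2 <= m)%N)
  (A : 'M[R]_m) (hA : forall i, A i i = 0) (s : 'S_m) :
  lop_global_max (lop_ext A) (lift_perm ord_max ord_max s) <-> lop_global_max A s.
Proof.
split=> s_max t.
  by rewrite -(lop_obj_ext_lift_perm A t) -(lop_obj_ext_lift_perm A s); apply: s_max.
by have [u ->] := lop_obj_ext_rotate A t; rewrite lop_obj_ext_lift_perm; apply: s_max.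
Qed.
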